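(* Let $G=(V,E)$ be a finite connected graph all of whose vertices have even degree, and let $v_0\in V$. Let $C$ be the expected vertex cover time of simple random walk on $G$ started at $v_0$. Then for every rule $\mathcal{R}$, the greedy random walk on $G$ with rule $\mathcal{R}$ started at $v_0$ satisfies \[ \mathbb{E}[C_E(G)]\le |E|+C. \]
   Context: A greedy random walk (GRW) on a connected locally finite graph $G=(V,E)$ with rule $\mathcal{R}$ started at $v_0$: $X_0=v_0$; with $H_t=\{\{X_{s-1},X_s\}:0<s\le t\}$ and $J_t(v)=\{e\in E: v\in e, e\notin H_t\}$, if $J_t(X_t)\ne\emptyset$ then $X_{t+1}=w$ for some $w$ with $\{X_t,w\}\in J_t(X_t)$, chosen according to an arbitrary (possibly randomized, history-dependent) rule $\mathcal{R}$; if $J_t(X_t)=\emptyset$ then $X_{t+1}$ is a uniformly random neighbor of $X_t$. $C_E(G)=\min\{t:H_t=E\}$ is the edge cover time. The vertex cover time of simple random walk is the first time at which every vertex has been visited. *)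

From Stdlib Require Export Reals.
From mathcomp Require Export all_boot.
Set Implicit Arguments. Unset Strict Implicit. Unset Printing Implicit Defensive.

Definition sumR {A : Type} (f : A -> R) (s : seq A) : R :=
  foldr (fun x acc => Rplus (f x) acc) R0 s.

Section GRW.
Variable T : finType.
Variable e : rel T.   (* simple graph: symmetric irreflexive adjacency *)

Definition deg (v : T) : nat := #|[pred w | e v w]|.

Definition numEdges : R := Rdiv (INR #|[pred p : T * T | e p.1 p.2]|) 2.

(* the undirected edge {u,w} is among the traversed edges of the
   vertex sequence p = X_0 ... X_t, i.e. {u,w} \in H_t *)
Definition traversed (p : seq T) (u w : T) : bool :=
  has (fun xy => (xy == (u, w)) || (xy == (w, u))) (zip p (behead p)).

Definition unused (p : seq T) (v w : T) : bool := e v w && ~~ traversed p v w.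

(* A rule: given the full history X_0..X_t (a nonempty sequence), a
   probability distribution on the next vertex; it must be a probability
   distribution supported on J_t(X_t) whenever J_t(X_t) is nonempty. *)
Definition valid_rule (rule : seq T -> T -> R) : Prop :=
  forall (x : T) (s : seq T),
    let h := x :: s in let v := last x s in
    has (unused h v) (enum T) ->
      (forall w, Rle R0 (rule h w)) /\
      (forall w, rule h w <> R0 -> unused h v w) /\
      sumR (rule h) (enum T) = R1.

(* transition probability of the greedy random walk, history h (nonempty,
   x0 only used as a default for last) *)
Definition grw_step (rule : seq T -> T -> R) (x0 : T) (h : seq T) (w : T) : R :=
  let v := last x0 h in
  if has (unused h v) (enum T) then rule h w
  else if e v w then Rinv (INR (deg v)) else R0.

Definition srw_step (x0 : T) (h : seq T) (w : T) : R :=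
  let v := last x0 h in if e v w then Rinv (INR (deg v)) else R0.

(* probability that the walk with kernel step, having history h,
   next visits xs in order *)
Fixpoint pathprob (step : seq T -> T -> R) (h : seq T) (xs : seq T) : R :=
  match xs with
  | [::] => R1
  | x :: xs' => Rmult (step h x) (pathprob step (rcons h x) xs')
  end.

Fixpoint allseqs (n : nat) : seq (seq T) :=
  match n with
  | 0 => [:: [::]]
  | n'.+1 => [seq x :: s | x <- enum T, s <- allseqs n']
  end.

Definition edge_covered (p : seq T) : bool :=
  [forall u, forall w, e u w ==> traversed p u w].

Definition vertex_covered (p : seq T) : bool := [forall u, u \in p].

(* P(cover time > t), where cover = first time the covered predicate holds *)
Definition tail_prob (step : seq T -> T -> R) (v0 : T)
    (cov : seq T -> bool) (t : nat) : R :=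
  sumR (fun xs => if cov (v0 :: xs) then R0 else pathprob step [:: v0] xs)
       (allseqs t).

(* partial sums sum_{t<n} P(cover time > t); their supremum is the
   expected cover time (in [0, +oo]) *)
Definition partial_exp (step : seq T -> T -> R) (v0 : T)
    (cov : seq T -> bool) (n : nat) : R :=
  sumR (tail_prob step v0 cov) (iota 0 n).

End GRW.

From Stdlib Require Import Lra.

Set Implicit Arguments. Unset Strict Implicit. Unset Printing Implicit Defensive.
Open Scope R_scope.

(* Couple the greedy walk (history h) with a simple random walk (history g):
   while the greedy walk has an unused edge at its position it moves alone and
   uses up one edge, otherwise both walks take the same uniform step.  The
   invariant is that every vertex of g other than its endpoint has all its
   edges used, and that the unused edges have odd degree exactly at the two
   endpoints of h and g when these differ (all degrees are even initially, and
   a greedy step changes the parity only at its two ends).  A stuck greedy walk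
   therefore sits where the coupled walk sits, and once g has visited every
   vertex all edges are used.  Each greedy step costs one edge, so by
   induction on the horizon the truncated expected edge cover time from h is
   at most (number of unused edges) plus the truncated expected vertex cover
   time from g. *)

Section SumR.
Variable A : Type.
Implicit Types (f g : A -> R) (s : seq A).

Lemma eq_sumR f g s : f =1 g -> sumR f s = sumR g s.
Proof. by move=> fg; elim: s => //= x s ->; rewrite fg. Qed.

Lemma ler_sumR f g s : (forall x, f x <= g x) -> sumR f s <= sumR g s.
Proof. by move=> fg; elim: s => /= [|x s IH]; [lra | have := fg x; lra]. Qed.

Lemma sumR_ge0 f s : (forall x, 0 <= f x) -> 0 <= sumR f s.
Proof. by move=> f0; elim: s => /= [|x s IH]; [lra | have := f0 x; lra]. Qed.

Lemma sumR_add f g s : sumR (fun x => f x + g x) s = sumR f s + sumR g s.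
Proof. by elim: s => /= [|x s ->]; lra. Qed.

Lemma sumR_mull a f s : sumR (fun x => a * f x) s = a * sumR f s.
Proof. by elim: s => /= [|x s ->]; lra. Qed.

Lemma sumR_mulr a f s : sumR (fun x => f x * a) s = sumR f s * a.
Proof. by elim: s => /= [|x s ->]; lra. Qed.

Lemma sumR_cat f s1 s2 : sumR f (s1 ++ s2) = sumR f s1 + sumR f s2.
Proof. by elim: s1 => /= [|x s ->]; lra. Qed.

Lemma sumR_flatten f (ss : seq (seq A)) : sumR f (flatten ss) = sumR (sumR f) ss.
Proof. by elim: ss => //= s ss <-; rewrite sumR_cat. Qed.

Lemma sumR_count (P : pred A) a s :
  sumR (fun x => if P x then a else 0) s = INR (count P s) * a.
Proof.
elim: s => /= [|x s ->]; first lra.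
by case: (P x); [rewrite add1n S_INR | rewrite add0n]; lra.
Qed.

Lemma sumR_map (B : Type) f (h : B -> A) (s : seq B) :
  sumR f (map h s) = sumR (fun y => f (h y)) s.
Proof. by elim: s => //= y s ->. Qed.

Lemma exchange_sumR (B : Type) (F : A -> B -> R) s (t : seq B) :
  sumR (fun x => sumR (F x) t) s = sumR (fun y => sumR (fun x => F x y) s) t.
Proof.
elim: s => /= [|x s ->]; first by elim: t => //= y t <-; lra.
by elim: t => /= [|y t IH]; [lra | rewrite -IH; lra].
Qed.

End SumR.

Lemma Rinv_INR_ge0 n : 0 <= / INR n.
Proof.
case: n => [|n]; first by rewrite Rinv_0; lra.
by apply/Rlt_le/Rinv_0_lt_compat/lt_0_INR/ltP.
Qed.

Lemma zip_cons_rcons (A : Type) (x : A) s w :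
  zip (x :: rcons s w) (rcons s w) = rcons (zip (x :: s) s) (last x s, w).
Proof. by elim: s x => //= y s IH x; rewrite IH. Qed.

Section TruncatedCoverTime.
Variables (T : finType) (step : seq T -> T -> R) (cov : seq T -> bool).

Definition tail_from (h : seq T) (t : nat) : R :=
  sumR (fun xs => if cov (h ++ xs) then 0 else pathprob step h xs) (allseqs T t).

(* The expected number of the next n steps taken before [cov] holds, for the
   walk continuing the history h. *)
Fixpoint cover_time_trunc (h : seq T) (n : nat) : R :=
  match n with
  | 0 => 0
  | n'.+1 => (if cov h then 0 else 1) +
             sumR (fun x => step h x * cover_time_trunc (rcons h x) n') (enum T)
  end.

Lemma cover_time_truncS h n :
  cover_time_trunc h n.+1 = (if cov h then 0 else 1) +
    sumR (fun x => step h x * cover_time_trunc (rcons h x) n) (enum T).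
Proof. by []. Qed.

Lemma tail_from0 h : tail_from h 0 = if cov h then 0 else 1.
Proof. by rewrite /tail_from /= cats0; case: (cov h); lra. Qed.

Lemma tail_fromS h t :
  tail_from h t.+1 = sumR (fun x => step h x * tail_from (rcons h x) t) (enum T).
Proof.
rewrite /tail_from /= sumR_flatten sumR_map; apply: eq_sumR => x.
rewrite sumR_map -sumR_mull; apply: eq_sumR => s /=.
by rewrite -cat_rcons; case: (cov _); lra.
Qed.

Lemma cover_time_trunc_tail h n :
  cover_time_trunc h n = sumR (tail_from h) (iota 0 n).
Proof.
elim: n h => [|n IH] h //=.
rewrite tail_from0 -(addn0 1%N) iotaDl sumR_map; congr (_ + _).
under [RHS]eq_sumR => t do rewrite add1n tail_fromS.
by rewrite exchange_sumR; apply: eq_sumR => x; rewrite sumR_mull IH.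
Qed.

Lemma partial_exp_trunc v0 n :
  partial_exp step v0 cov n = cover_time_trunc [:: v0] n.
Proof. by rewrite cover_time_trunc_tail. Qed.

Lemma cover_time_trunc_nondecr h n :
  (forall h x, 0 <= step h x) -> cover_time_trunc h n <= cover_time_trunc h n.+1.
Proof.
move=> step_ge0; elim: n h => [|n IH] h.
  have : 0 <= sumR (fun x => step h x * 0) (enum T).
    by apply: sumR_ge0 => x; rewrite Rmult_0_r; lra.
  by rewrite /=; case: (cov h); lra.
apply: Rplus_le_compat_l; apply: ler_sumR => x.
exact: Rmult_le_compat_l.
Qed.

End TruncatedCoverTime.

Section Coupling.
Variables (T : finType) (e : rel T) (v0 : T).
Hypotheses (e_sym : symmetric e) (e_irr : irreflexive e).
Implicit Types (h g : seq T).

Lemma traversedC h a b : traversed h a b = traversed h b a.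
Proof. by apply: eq_has => xy; rewrite orbC. Qed.

Lemma unusedC h a b : unused e h a b = unused e h b a.
Proof. by rewrite /unused e_sym traversedC. Qed.

Lemma traversed_rcons h w a b : h != [::] ->
  traversed (rcons h w) a b =
  traversed h a b || (((a == last v0 h) && (b == w)) || ((a == w) && (b == last v0 h))).
Proof.
case: h => // x s _.
rewrite /traversed /= zip_cons_rcons -cats1 has_cat /= orbF !xpair_eqE.
rewrite (eq_sym (last x s) a) (eq_sym w b) (eq_sym (last x s) b) (eq_sym w a).
by rewrite [(b == _) && _]andbC.
Qed.

Definition unused_deg h x : nat := #|[pred y | unused e h x y]|.

(* Ordered pairs, so this is twice the number of unused edges. *)
Definition unused_arcs h : nat := #|[pred p : T * T | unused e h p.1 p.2]|.

Definition stuck h : bool := ~~ has (unused e h (last v0 h)) (enum T).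

Definition coupled h g : Prop :=
  [/\ h != [::], g != [::],
   forall x, x \in g -> x != last v0 g -> forall y, e x y -> traversed h x y &
   forall x, odd (unused_deg h x) =
             (last v0 h != last v0 g) && ((x == last v0 h) || (x == last v0 g))].

Lemma coupled_init : (forall v, ~~ odd (deg e v)) -> coupled [:: v0] [:: v0].
Proof.
move=> even_deg; split=> // [x|x].
  by rewrite inE => /eqP ->; rewrite eqxx.
have -> : unused_deg [:: v0] x = deg e x.
  by apply: eq_card => y; rewrite !inE /unused /= andbT.
by rewrite eqxx; exact: negbTE.
Qed.

Lemma unused_arcs_init : INR (unused_arcs [:: v0]) / 2 = numEdges e.
Proof.
rewrite /numEdges; congr (INR _ / 2).
by apply: eq_card => p; rewrite !inE /unused /= andbT.
Qed.

Section GreedyStep.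
Variables (h g : seq T) (w : T).
Hypotheses (hn : h != [::]) (unused_vw : unused e h (last v0 h) w).
Local Notation v := (last v0 h).

Let evw : e v w. Proof. by case/andP: unused_vw. Qed.
Let neq_vw : v != w. Proof. by apply: contraTneq evw => ->; rewrite e_irr. Qed.
Let unused_wv : unused e h w v. Proof. by rewrite unusedC. Qed.

Lemma unused_greedy_rcons a b :
  unused e (rcons h w) a b =
  unused e h a b && ~~ (((a == v) && (b == w)) || ((a == w) && (b == v))).
Proof. by rewrite /unused traversed_rcons // negb_or andbA. Qed.

Lemma unused_arcs_greedy : unused_arcs h = (unused_arcs (rcons h w)).+2.
Proof.
rewrite /unused_arcs (cardD1x (j := (v, w))) //= (cardD1x (j := (w, v))) /=; last first.
  by rewrite unused_wv xpair_eqE eq_sym (negbTE neq_vw).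
rewrite !add1n; congr _.+2; apply: eq_card => [[a b]].
by rewrite !inE /= unused_greedy_rcons !xpair_eqE negb_or -!andbA.
Qed.

Lemma unused_deg_greedy x :
  unused_deg h x = (unused_deg (rcons h w) x + ((x == v) || (x == w)))%N.
Proof.
rewrite /unused_deg.
case: (eqVneq x v) => [->|xv].
  rewrite addn1 (cardD1x (A := unused e h v) unused_vw) add1n.
  congr _.+1; apply: eq_card => y.
  by rewrite !inE unused_greedy_rcons eqxx (negbTE neq_vw) andTb andFb orbF.
case: (eqVneq x w) => [->|xw].
  rewrite addn1 (cardD1x (A := unused e h w) unused_wv) add1n.
  congr _.+1; apply: eq_card => y.
  by rewrite !inE unused_greedy_rcons eqxx [w == v]eq_sym (negbTE neq_vw) andFb andTb.
rewrite addn0; apply: eq_card => y.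
by rewrite !inE unused_greedy_rcons (negbTE xv) (negbTE xw) !andFb orbF andbT.
Qed.

Lemma coupled_greedy : coupled h g -> coupled (rcons h w) g.
Proof.
case=> _ gn used_g parity; split=> //.
- by rewrite -size_eq0 size_rcons.
- by move=> x xg xl y exy; rewrite traversed_rcons // used_g.
move=> x; rewrite last_rcons; have := parity x.
rewrite unused_deg_greedy oddD oddb; move: (odd _) => p.
move: (last v0 g) => u.
case: (eqVneq x v) => [->|xv].
  rewrite (negbTE neq_vw).
  case: (eqVneq v u) => [<-|vu]; last by rewrite andbF; case: p.
  by rewrite [w == v]eq_sym neq_vw; case: p.
case: (eqVneq x w) => [->|xw].
  case: (eqVneq w u) => [<-|wu]; last by rewrite andbF; case: p.
  by rewrite neq_vw; case: p.
rewrite addbF; case: (eqVneq x u) => [<-|xu]; last by rewrite !andbF.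
by rewrite (eq_sym v) (eq_sym w) xv xw.
Qed.

End GreedyStep.

Section StuckStep.
Variables (h g : seq T).
Hypotheses (hn : h != [::]) (h_stuck : stuck h).
Local Notation v := (last v0 h).

Lemma stuck_traversed y : e v y -> traversed h v y.
Proof.
move=> evy; move/hasPn: h_stuck => /(_ y (mem_enum _ y)).
by rewrite /unused evy negbK.
Qed.

Lemma traversed_stuck_rcons w a b :
  e v w -> traversed (rcons h w) a b = traversed h a b.
Proof.
move=> evw; rewrite traversed_rcons //; case: (boolP (traversed h a b)) => //= tab.
apply/negP => /orP[] /andP[/eqP eav /eqP ebw]; move: tab; rewrite eav ebw.
  by rewrite stuck_traversed.
by rewrite traversedC stuck_traversed.
Qed.

Lemma unused_arcs_stuck w : e v w -> unused_arcs (rcons h w) = unused_arcs h.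
Proof.
by move=> evw; apply: eq_card => p; rewrite !inE /unused traversed_stuck_rcons.
Qed.

Lemma unused_deg_stuck : unused_deg h v = 0%N.
Proof.
apply: eq_card0 => y; rewrite !inE /unused.
by case: (boolP (e v y)) => // /stuck_traversed ->.
Qed.

Lemma coupled_stuck_last : coupled h g -> v = last v0 g.
Proof.
case=> _ _ _ /(_ v); rewrite unused_deg_stuck eqxx orTb andbT.
by move/esym/negbFE/eqP.
Qed.

Lemma coupled_stuck_covered : coupled h g -> vertex_covered g -> edge_covered e h.
Proof.
move=> hg /forallP g_covers; have vg := coupled_stuck_last hg; case: hg => _ _ used_g _.
apply/forallP => a; apply/forallP => b; apply/implyP => eab.
have [av|] := eqVneq a (last v0 g); last by move=> av; apply: used_g (g_covers a) av _ eab.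
by rewrite av -vg stuck_traversed // vg -av.
Qed.

Lemma coupled_stuck w : coupled h g -> e v w -> coupled (rcons h w) (rcons g w).
Proof.
move=> hg evw; have vg := coupled_stuck_last hg; case: hg => _ _ used_g parity.
split; rewrite ?last_rcons.
- by rewrite -size_eq0 size_rcons.
- by rewrite -size_eq0 size_rcons.
- move=> x; rewrite mem_rcons inE => /orP[/eqP->|xg]; first by rewrite eqxx.
  move=> xw y exy; rewrite traversed_stuck_rcons //.
  have [xv|] := eqVneq x (last v0 g); last by move=> xu; apply: used_g xg xu _ exy.
  by rewrite xv -vg stuck_traversed // vg -xv.
- move=> x; rewrite eqxx andFb.
  have -> : unused_deg (rcons h w) x = unused_deg h x.
    by apply: eq_card => y; rewrite !inE /unused traversed_stuck_rcons.
  by rewrite parity vg eqxx.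
Qed.

End StuckStep.

End Coupling.

Section Kernels.
Variables (T : finType) (e : rel T) (v0 : T).
Implicit Types (h : seq T) (rule : seq T -> T -> R).

Lemma srw_step_ge0 h x : 0 <= srw_step e v0 h x.
Proof. by rewrite /srw_step; case: ifP => _; [apply: Rinv_INR_ge0 | lra]. Qed.

Lemma sumR_srw_step_le1 h : sumR (srw_step e v0 h) (enum T) <= 1.
Proof.
rewrite /srw_step sumR_count.
have -> : count (e (last v0 h)) (enum T) = deg e (last v0 h).
  by rewrite /deg enumT cardE /enum_mem size_filter; apply: eq_count => y; rewrite !inE.
case: (deg e _) => [|d]; first by rewrite Rmult_0_l; lra.
by rewrite Rinv_r; [lra | apply: not_0_INR].
Qed.

Lemma grw_step_stuck rule h : stuck e v0 h -> grw_step e rule v0 h =1 srw_step e v0 h.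
Proof. by rewrite /grw_step /stuck => /negbTE ->. Qed.

Lemma grw_step_greedy rule h : ~~ stuck e v0 h -> grw_step e rule v0 h =1 rule h.
Proof. by rewrite /grw_step /stuck negbK => ->. Qed.

Lemma valid_rule_distr rule h : valid_rule e rule -> h != [::] -> ~~ stuck e v0 h ->
  [/\ forall w, 0 <= rule h w,
      forall w, rule h w <> 0 -> unused e h (last v0 h) w &
      sumR (rule h) (enum T) = 1].
Proof.
case: h => // x s valid _; rewrite /stuck negbK /= => greedy.
by have [? [? ?]] := valid x s greedy.
Qed.

End Kernels.

Section GreedyCoverTime.
Variables (T : finType) (e : rel T) (v0 : T) (rule : seq T -> T -> R).
Hypotheses (e_sym : symmetric e) (e_irr : irreflexive e) (valid : valid_rule e rule).

Local Notation Eg := (cover_time_trunc (grw_step e rule v0) (edge_covered e)).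
Local Notation Es := (cover_time_trunc (srw_step e v0) (@vertex_covered T)).
Local Notation half_arcs h := (INR (unused_arcs e h) / 2).

Definition coupling_bound_at n : Prop :=
  forall h g, coupled e v0 h g -> Eg h n <= half_arcs h + Es g n.

Lemma coupling_bound_greedy n h g : coupling_bound_at n ->
  coupled e v0 h g -> ~~ stuck e v0 h -> Eg h n.+1 <= half_arcs h + Es g n.+1.
Proof.
move=> IH hg greedy; have hn : h != [::] by case: hg.
have [rule_ge0 rule_supp rule_sum] := valid_rule_distr valid hn greedy.
have step_le x : grw_step e rule v0 h x * Eg (rcons h x) n <=
                 rule h x * (half_arcs h - 1 + Es g n).
  rewrite grw_step_greedy //.
  have [->|nz] := Req_dec (rule h x) 0; first by rewrite !Rmult_0_l; lra.
  apply: Rmult_le_compat_l => //.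
  have uw := rule_supp x nz.
  have := IH _ _ (coupled_greedy e_sym e_irr hn uw hg).
  by rewrite (unused_arcs_greedy e_sym e_irr hn uw) !S_INR; lra.
have := ler_sumR (enum T) step_le; rewrite sumR_mulr rule_sum.
have := cover_time_trunc_nondecr (@vertex_covered T) g n (srw_step_ge0 e v0).
rewrite !cover_time_truncS.
by case: (edge_covered e h); case: (vertex_covered g); lra.
Qed.

Lemma coupling_bound_stuck n h g : coupling_bound_at n ->
  coupled e v0 h g -> stuck e v0 h -> Eg h n.+1 <= half_arcs h + Es g n.+1.
Proof.
move=> IH hg st; have hn : h != [::] by case: hg.
have vg := coupled_stuck_last st hg.
have srw_hg : srw_step e v0 h =1 srw_step e v0 g by move=> x; rewrite /srw_step vg.
have step_le x : grw_step e rule v0 h x * Eg (rcons h x) n <=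
    srw_step e v0 h x * half_arcs h + srw_step e v0 g x * Es (rcons g x) n.
  rewrite grw_step_stuck // -srw_hg -Rmult_plus_distr_l.
  case: (boolP (e (last v0 h) x)) => [evx|nevx]; last by rewrite /srw_step (negbTE nevx); lra.
  apply: Rmult_le_compat_l; first exact: srw_step_ge0.
  by have := IH _ _ (coupled_stuck hn st hg evx); rewrite (unused_arcs_stuck hn st evx).
have sum_le : sumR (srw_step e v0 h) (enum T) * half_arcs h <= half_arcs h.
  have := sumR_srw_step_le1 e v0 h; have := pos_INR (unused_arcs e h); nra.
have cover_le : (if edge_covered e h then 0 else 1) <= (if vertex_covered g then 0 else 1).
  case: (boolP (vertex_covered g)) => [/(coupled_stuck_covered st hg) -> | _]; first lra.
  by case: ifP => _; lra.
have := ler_sumR (enum T) step_le; rewrite sumR_add sumR_mulr !cover_time_truncS.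
lra.
Qed.

Lemma coupling_bound n : coupling_bound_at n.
Proof.
elim: n => [|n IH] h g hg; first by have := pos_INR (unused_arcs e h); rewrite /=; lra.
have [st|greedy] := boolP (stuck e v0 h).
- exact: coupling_bound_stuck.
- exact: coupling_bound_greedy.
Qed.

End GreedyCoverTime.

Theorem mainTheorem8 (T : finType) (e : rel T)
  (esym : symmetric e) (eirr : irreflexive e)
  (econn : forall u v : T, connect e u v)
  (eeven : forall v : T, ~~ odd (deg e v))
  (v0 : T) (rule : seq T -> T -> R) (hrule : valid_rule e rule) :
  forall n : nat, exists m : nat,
    Rle (partial_exp (grw_step e rule v0) v0 (edge_covered e) n)
        (Rplus (numEdges e) (partial_exp (srw_step e v0) v0 (@vertex_covered T) m)).
Proof.
move=> n; exists n.
rewrite !partial_exp_trunc -(unused_arcs_init e v0).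
exact: coupling_bound esym eirr hrule n _ _ (coupled_init v0 eeven).
Qed.
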